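(* Let $\rho$ be a density operator (positive, trace one, on a finite-dimensional or separable Hilbert space) with eigenvalues $\lambda_1\ge\lambda_2\ge\cdots$ listed in nonincreasing order with multiplicity, and for a positive integer $D$ let $\epsilon(D)=\sum_{i\ge D+1}\lambda_i$. Then for every $0<\alpha<1$, $$\epsilon(D)\le \exp\!\Big(\frac{1-\alpha}{\alpha}\Big(S^\alpha(\rho)-\log\frac{D}{1-\alpha}\Big)\Big),$$ i.e. $\log\epsilon(D)\le\frac{1-\alpha}{\alpha}\big(S^\alpha(\rho)-\log\frac{D}{1-\alpha}\big)$ whenever $\epsilon(D)>0$. *)

From Stdlib Require Import Reals.
Open Scope R_scope.

(* Real power x^a for x >= 0, with the convention 0^a = 0 (a > 0).
   (Stdlib's Rpower 0 a = exp (a * ln 0) = 1, which is not what we want.) *)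
Definition rpow (x a : R) : R := if Rlt_dec 0 x then Rpower x a else 0.

(* Spectrum of a density operator: eigenvalues lam 0 >= lam 1 >= ... (0-indexed,
   with multiplicity; finite-dimensional case = padded with zeros),
   nonnegative and summing to 1. *)
Definition density_spectrum (lam : nat -> R) : Prop :=
  (forall i, 0 <= lam i) /\
  (forall i, lam (S i) <= lam i) /\
  infinite_sum lam 1.

(* Renyi entropy S^alpha(rho) = 1/(1-alpha) * log Tr rho^alpha, where
   T = Tr rho^alpha = sum_i lam_i^alpha. *)
Definition renyi_entropy (alpha T : R) : R := ln T / (1 - alpha).

(** The eigenvalues below [x := λ_D] are at most [x], so [λ_i^α >= x^(α-1) λ_i]
    on the tail, while the [D] leading eigenvalues contribute at least [x^α]
    each.  Hence [Tr ρ^α >= x^(α-1) (D x + ε)], and weighted AM-GM with weights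
    [1-α, α] applied to [D x/(1-α)] and [ε/α] removes [x]:
    [Tr ρ^α >= (D/(1-α))^(1-α) (ε/α)^α >= (D/(1-α))^(1-α) ε^α]. *)

From Stdlib Require Import Reals Lra Lia.
Open Scope R_scope.

Lemma exp_le_compat x y : x <= y -> exp x <= exp y.
Proof. intros [Hlt | ->]; [left; apply exp_increasing; exact Hlt | right; reflexivity]. Qed.

Lemma ln_le_compat x y : 0 < x -> x <= y -> ln x <= ln y.
Proof. intros Hx [Hlt | ->]; [left; apply ln_increasing; assumption | right; reflexivity]. Qed.

Lemma ln_div x y : 0 < x -> 0 < y -> ln (x / y) = ln x - ln y.
Proof.
  intros Hx Hy. unfold Rdiv.
  rewrite ln_mult, ln_Rinv; [ring | exact Hy | exact Hx | apply Rinv_0_lt_compat, Hy].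
Qed.

(* Tangent-line argument at the convex combination [m]: [exp t >= exp m (1 + t - m)]. *)
Lemma exp_convex_comb a u v : 0 <= a <= 1 ->
  exp ((1 - a) * u + a * v) <= (1 - a) * exp u + a * exp v.
Proof.
  intros Ha. set (m := (1 - a) * u + a * v).
  assert (Hu : exp m * (1 + (u - m)) <= exp u).
  { replace (exp u) with (exp m * exp (u - m)) by (rewrite <- exp_plus; f_equal; ring).
    apply Rmult_le_compat_l; [left; apply exp_pos | apply exp_ineq1_le]. }
  assert (Hv : exp m * (1 + (v - m)) <= exp v).
  { replace (exp v) with (exp m * exp (v - m)) by (rewrite <- exp_plus; f_equal; ring).
    apply Rmult_le_compat_l; [left; apply exp_pos | apply exp_ineq1_le]. }
  assert (Hm : (1 - a) * (exp m * (1 + (u - m))) + a * (exp m * (1 + (v - m))) = exp m)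
    by (unfold m; ring).
  rewrite <- Hm at 1.
  apply Rplus_le_compat; apply Rmult_le_compat_l; lra.
Qed.

Lemma weighted_am_gm a p q : 0 <= a <= 1 -> 0 < p -> 0 < q ->
  Rpower p (1 - a) * Rpower q a <= (1 - a) * p + a * q.
Proof.
  intros Ha Hp Hq. unfold Rpower. rewrite <- exp_plus.
  rewrite <- (exp_ln p) at 2 by exact Hp. rewrite <- (exp_ln q) at 2 by exact Hq.
  replace (ln p * (1 - a) + ln q * a) with ((1 - a) * ln p + a * ln q) by ring.
  apply exp_convex_comb, Ha.
Qed.

Lemma Rpower_le_rpow x y a : 0 <= a -> 0 < x <= y -> Rpower x a <= rpow y a.
Proof.
  intros Ha [Hx Hxy]. unfold rpow.
  destruct (Rlt_dec 0 y) as [Hy | Hy]; [apply Rle_Rpower_l; lra | lra].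
Qed.

(* For [a <= 1] the map [y ↦ y^(a-1)] is nonincreasing, so [y^a = y^(a-1) y >= x^(a-1) y]. *)
Lemma Rpower_mul_le_rpow x y a : a <= 1 -> 0 < x -> 0 <= y <= x ->
  Rpower x (a - 1) * y <= rpow y a.
Proof.
  intros Ha Hx [Hy Hyx]. unfold rpow.
  destruct (Rlt_dec 0 y) as [Hy0 | Hy0].
  - replace (Rpower y a) with (Rpower y (a - 1) * y)
      by (rewrite <- (Rpower_1 y) at 2 by exact Hy0; rewrite <- Rpower_plus; f_equal; ring).
    apply Rmult_le_compat_r; [exact Hy|].
    apply exp_le_compat.
    assert (ln y <= ln x) by (apply ln_le_compat; assumption).
    nra.
  - replace y with 0 by lra. lra.
Qed.

Lemma sum_head_tail_lb (g f : nat -> R) (a c : R) (D N : nat) :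
  (forall i, (i < D)%nat -> a <= g i) ->
  (forall i, c * f i <= g (i + D)%nat) ->
  INR D * a + c * sum_f_R0 f N <= sum_f_R0 g (N + D).
Proof.
  revert g. induction D as [|D IH]; intros g Hhead Htail.
  - rewrite Nat.add_0_r, scal_sum. simpl INR.
    rewrite Rmult_0_l, Rplus_0_l.
    apply sum_Rle. intros i _.
    rewrite Rmult_comm. specialize (Htail i). rewrite Nat.add_0_r in Htail. exact Htail.
  - rewrite (decomp_sum g) by lia. rewrite Nat.add_succ_r. simpl pred.
    rewrite S_INR.
    assert (Hrest : INR D * a + c * sum_f_R0 f N <= sum_f_R0 (fun i => g (S i)) (N + D)).
    { apply IH.
      - intros i Hi. apply Hhead. lia.
      - intro i. rewrite <- Nat.add_succ_r. apply Htail. }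
    assert (a <= g 0%nat) by (apply Hhead; lia).
    lra.
Qed.

Lemma infinite_sum_head_tail_lb (g f : nat -> R) (a c : R) (D : nat) (T eps : R) :
  infinite_sum g T -> infinite_sum f eps ->
  (forall i, (i < D)%nat -> a <= g i) ->
  (forall i, c * f i <= g (i + D)%nat) ->
  INR D * a + c * eps <= T.
Proof.
  intros HT Heps Hhead Htail.
  apply Rle_cv_lim with (Un := fun N => INR D * a + c * sum_f_R0 f N)
                        (Vn := fun N => sum_f_R0 g (N + D)).
  - intro N. apply sum_head_tail_lb; assumption.
  - apply (continuity_seq (fun y => INR D * a + c * y)); [reg | exact Heps].
  - apply (CV_shift' (sum_f_R0 g)), HT.
Qed.

Lemma infinite_sum_nonpos (f : nat -> R) (l : R) :
  (forall i, f i <= 0) -> infinite_sum f l -> l <= 0.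
Proof.
  intros Hf Hl.
  apply Rle_cv_lim with (Un := sum_f_R0 f) (Vn := fun _ => 0).
  - intro N. rewrite <- (Rmult_0_l (INR (S N))), <- sum_cte. apply sum_Rle. auto.
  - exact Hl.
  - intros e He. exists 0%nat. intros. unfold Rdist. rewrite Rminus_diag, Rabs_R0. exact He.
Qed.

(* The factor [α^(-α) >= 1] coming from [ε/α] is dropped. *)
Lemma renyi_tail_ln_bound (D x a eps T : R) :
  0 < D -> 0 < a < 1 -> 0 < x -> 0 < eps ->
  D * Rpower x a + Rpower x (a - 1) * eps <= T ->
  a * ln eps + (1 - a) * ln (D / (1 - a)) <= ln T.
Proof.
  intros HD Ha Hx Heps HT.
  set (p := D * x / (1 - a)). set (q := eps / a).
  assert (Hp : 0 < p) by (apply Rdiv_lt_0_compat; nra).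
  assert (Hq : 0 < q) by (apply Rdiv_lt_0_compat; lra).
  assert (Hfactor : D * Rpower x a + Rpower x (a - 1) * eps
                    = Rpower x (a - 1) * ((1 - a) * p + a * q)).
  { replace (Rpower x a) with (Rpower x (a - 1) * x)
      by (rewrite <- (Rpower_1 x) at 2 by exact Hx; rewrite <- Rpower_plus; f_equal; ring).
    unfold p, q. field. lra. }
  assert (Hlow : Rpower x (a - 1) * (Rpower p (1 - a) * Rpower q a) <= T).
  { eapply Rle_trans; [|exact HT]. rewrite Hfactor.
    apply Rmult_le_compat_l; [left; apply exp_pos | apply weighted_am_gm; lra]. }
  assert (Hprod : 0 < Rpower x (a - 1) * (Rpower p (1 - a) * Rpower q a))
    by (unfold Rpower; rewrite <- exp_plus, <- exp_plus; apply exp_pos).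
  apply ln_le_compat in Hlow; [|exact Hprod].
  rewrite !ln_mult, !ln_Rpower in Hlow by (unfold Rpower; try rewrite <- exp_plus; apply exp_pos).
  unfold p, q in Hlow. rewrite !ln_div, ln_mult in Hlow by nra.
  rewrite ln_div by lra.
  assert (ln a < 0) by (rewrite <- ln_1; apply ln_increasing; lra).
  nra.
Qed.

Theorem lemma2 (lam : nat -> R) (D : nat) (alpha T eps : R) :
  density_spectrum lam ->
  (1 <= D)%nat ->
  0 < alpha < 1 ->
  infinite_sum (fun i => rpow (lam i) alpha) T ->
  infinite_sum (fun i => lam (i + D)%nat) eps ->
  eps <= exp ((1 - alpha) / alpha *
              (renyi_entropy alpha T - ln (INR D / (1 - alpha)))).
Proof.
  intros [Hnonneg [Hdecr _]] HD Ha HT Heps.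
  destruct (Rle_or_lt eps 0) as [Heps0 | Heps0].
  { eapply Rle_trans; [exact Heps0 | left; apply exp_pos]. }
  set (x := lam (pred D)).
  assert (Htail : forall i, lam (i + D)%nat <= x)
    by (intro i; apply decreasing_prop; [exact Hdecr | lia]).
  assert (Hx : 0 < x).
  { apply Rnot_le_lt. intro Hx0.
    enough (eps <= 0) by lra.
    apply (infinite_sum_nonpos _ _ (fun i => Rle_trans _ _ _ (Htail i) Hx0) Heps). }
  assert (Hbound : INR D * Rpower x alpha + Rpower x (alpha - 1) * eps <= T).
  { apply (infinite_sum_head_tail_lb _ _ _ _ D T eps HT Heps).
    - intros i Hi. apply Rpower_le_rpow; [lra|]. split; [exact Hx|].
      apply decreasing_prop; [exact Hdecr | lia].
    - intro i. apply Rpower_mul_le_rpow; [lra | exact Hx | split; [apply Hnonneg | apply Htail]]. }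
  apply renyi_tail_ln_bound in Hbound;
    [| apply lt_0_INR; lia | exact Ha | exact Hx | exact Heps0].
  rewrite <- (exp_ln eps) by exact Heps0. apply exp_le_compat.
  unfold renyi_entropy.
  apply Rmult_le_reg_l with alpha; [lra|].
  replace (alpha * ((1 - alpha) / alpha * (ln T / (1 - alpha) - ln (INR D / (1 - alpha)))))
    with (ln T - (1 - alpha) * ln (INR D / (1 - alpha))) by (field; lra).
  lra.
Qed.
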